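(* Let $\Gamma$ be a metrized graph that is a tree with $v \geq 5$ vertices, and let $k$ be an integer with $1 \leq k \leq v-4$. Then $$W(\Gamma)= \frac{(v-4-k)!}{(v-4)!}\sum_{e_{i_1} \in E(\Gamma)} \sum_{e_{i_2} \in E(\overline{\Gamma}_{i_1})}\cdots\sum_{e_{i_k} \in E(\overline{\Gamma}_{i_1, \dots, i_{k-1}})} W(\overline{\Gamma}_{i_1,\dots, i_k}) -\frac{\big(v^2-(k+2)v+k-1 \big)k}{(v-k-2)(v-k-3) }\,\ell(\Gamma).$$ In particular, for $k=v-4$, $$W(\Gamma)= \frac{1}{(v-4)!}\sum_{e_{i_1} \in E(\Gamma)}\cdots\sum_{e_{i_{v-4}} \in E(\overline{\Gamma}_{i_1, \dots, i_{v-5}})} W(\overline{\Gamma}_{i_1,\dots, i_{v-4}}) -\frac{(3v-5)(v-4)}{2}\,\ell(\Gamma).$$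
   Context: A metrized graph is a finite connected graph each of whose edges is identified with a closed segment of positive length; its vertex set $V(\Gamma)$ is a finite nonempty set containing every point of valence $\neq 2$, $v=\#V(\Gamma)$, and $E(\Gamma)$ is its edge set. $\ell(\Gamma)$ is the total length. The Wiener index is $W(\Gamma)=\frac12\sum_{p,q\in V(\Gamma)}d(p,q)$ with $d$ the path distance. $\overline\Gamma_{i_1,\dots,i_k}$ is the tree obtained by successively contracting to a point the edge $e_{i_1}\in E(\Gamma)$, then $e_{i_2}\in E(\overline\Gamma_{i_1})$, and so on, with vertex sets the images of $V(\Gamma)$; the sums run over all such ordered choices of edges. *)

From mathcomp Require Import all_boot all_order all_algebra.
From mathcomp Require Import boolp classical_sets reals.
Set Implicit Arguments. Unset Strict Implicit. Unset Printing Implicit Defensive.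
Import Order.TTheory GRing.Theory Num.Theory.
Local Open Scope ring_scope.
Local Open Scope classical_set_scope.

(* A (combinatorial model of a) metrized graph: a list of vertex labels and a
   list of edges (a, b, len) joining vertices a and b by a segment of length len. *)
Record mgraph (R : realType) := MGraph {
  mverts : seq nat;
  medges : seq (nat * nat * R) }.

Section MG.
Variable R : realType.
Implicit Types G : mgraph R.

Definition edge0 : nat * nat * R := (0%N, 0%N, 0).
Definition edge_at G (j : nat) := nth edge0 (medges G) j.

Fixpoint is_walk (E : seq (nat * nat * R)) (p q : nat) (s : seq nat) : bool :=
  match s with
  | [::] => p == q
  | j :: s' =>
      let: (a, b, _) := nth edge0 E j in
      (j < size E)%N &&
      (((a == p) && is_walk E b q s') || ((b == p) && is_walk E a q s'))
  end.

Definition walk_len (E : seq (nat * nat * R)) (s : seq nat) : R :=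
  \sum_(j <- s) (nth edge0 E j).2.

Definition dist G (p q : nat) : R :=
  inf [set x : R | exists s, is_walk (medges G) p q s /\ x = walk_len (medges G) s].

Definition wiener G : R :=
  2^-1 * \sum_(p <- mverts G) \sum_(q <- mverts G) dist G p q.

Definition total_length G : R := \sum_(e <- medges G) e.2.

Definition nverts G : nat := size (mverts G).

Definition is_metrized_tree G : Prop :=
  [/\ uniq (mverts G),
      all (fun e : nat * nat * R =>
             [&& e.1.1 \in mverts G, e.1.2 \in mverts G, e.1.1 != e.1.2 & 0 < e.2])
          (medges G),
      (forall p q, p \in mverts G -> q \in mverts G ->
          exists s, is_walk (medges G) p q s)
    & size (medges G) = (size (mverts G)).-1 ].

Definition contract G (j : nat) : mgraph R :=
  let: (a, b, _) := edge_at G j in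
  let ren x := if x == b then a else x in
  MGraph (undup (map ren (mverts G)))
         (map (fun e : nat * nat * R => (ren e.1.1, ren e.1.2, e.2))
              (take j (medges G) ++ drop j.+1 (medges G))).

Fixpoint iter_contr_sum (k : nat) G : R :=
  match k with
  | 0%N => wiener G
  | k'.+1 => \sum_(j < size (medges G)) iter_contr_sum k' (contract G j)
  end.

End MG.

(* In a tree the distance between two vertices is the total length of the
   edges separating them, so W = sum_e len(e) n_e (v - n_e), where n_e and
   v - n_e are the orders of the two subtrees left by removing e.  Contracting
   an edge f <> e removes one vertex from the side of e containing f, and a side
   with n vertices carries n - 1 edges; summing over f gives
   sum_f W(G/f) = (v - 4) W + v len(G), while sum_f len(G/f) = (v - 2) len(G).
   By induction the k-fold sum is (v-4)(v-5)...(v-3-k) (W + c(v,k) len(G)),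
   the coefficient c of the theorem being the solution of the recursion
   (v - 4) c(v, k+1) = v + (v - 2) c(v - 1, k), c(v, 0) = 0. *)

From mathcomp Require Import all_boot all_order all_algebra.
From mathcomp Require Import boolp classical_sets reals.
From mathcomp Require Import zify ring lra.
Import Order.TTheory GRing.Theory Num.Theory.
Local Open Scope ring_scope.

Set Implicit Arguments.
Unset Strict Implicit.
Unset Printing Implicit Defensive.

Section Connectivity.
Variable R : realType.
Local Notation edge := (nat * nat * R)%type.
Implicit Types (E L : seq edge) (e : edge) (V : seq nat).

Definition adj E x y := exists2 e, e \in E &
  ((e.1.1 = x /\ e.1.2 = y) \/ (e.1.2 = x /\ e.1.1 = y)).

Inductive conn E : nat -> nat -> Prop :=
| conn0 x : conn E x x
| connS x y z : adj E x y -> conn E y z -> conn E x z.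

Definition connected_on E V := forall p q, p \in V -> q \in V -> conn E p q.

Lemma adj_sym E x y : adj E x y -> adj E y x.
Proof. by case=> e eE [[<- <-]|[<- <-]]; exists e => //; [right|left]. Qed.

Lemma conn1 E x y : adj E x y -> conn E x y.
Proof. by move=> h; apply: connS h (conn0 _ _). Qed.

Lemma conn_trans E x y z : conn E x y -> conn E y z -> conn E x z.
Proof. by elim=> // a b c h _ IH /IH; apply: connS. Qed.

Lemma conn_sym E x y : conn E x y -> conn E y x.
Proof.
elim=> [a|a b c h _ IH]; first exact: conn0.
exact: conn_trans IH (conn1 (adj_sym h)).
Qed.

Lemma conn_by_adj E L p q : (forall x y, adj E x y -> conn L x y) ->
  conn E p q -> conn L p q.
Proof.
move=> h; elim=> [x|x y z /h hxy _ IH]; first exact: conn0.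
exact: conn_trans hxy IH.
Qed.

Lemma conn_sub E L x y : {subset E <= L} -> conn E x y -> conn L x y.
Proof. by move=> sEL; apply: conn_by_adj => a b [e /sEL eL h]; apply: conn1; exists e. Qed.

Lemma eq_conn E L x y : E =i L -> conn E x y -> conn L x y.
Proof. by move=> eqEL; apply: conn_sub => z; rewrite eqEL. Qed.

Lemma conn_edge E p q : p != q -> conn E p q ->
  exists2 e, e \in E & e.1.1 != e.1.2.
Proof.
move=> + h; elim: h => [x|x y z [e eE h] _ IH xz]; first by rewrite eqxx.
case: (eqVneq x y) => [xy|xy]; first by apply: IH; rewrite -xy.
by exists e => //; case: h => [[-> ->]|[-> ->]]; rewrite // eq_sym.
Qed.

Lemma is_walk_cat E p q s1 s2 :
  is_walk E p q (s1 ++ s2) <-> exists m, is_walk E p m s1 /\ is_walk E m q s2.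
Proof.
elim: s1 p => [|j s1 IH] p /=.
  by split; [move=> h; exists p | case=> m [/eqP -> ]].
case: (nth (edge0 R) E j) => [[a b] l].
split.
  case/andP=> js /orP [/andP [/eqP <- /IH [m [h1 h2]]]|/andP [/eqP <- /IH [m [h1 h2]]]];
    exists m; split=> //; rewrite js ?eqxx ?h1 ?orbT //.
case=> m [/andP [js /orP [/andP [ap h1]|/andP [bp h1]]] h2]; rewrite js /=.
  by rewrite ap (proj2 (IH b)) //; exists m.
by rewrite bp (proj2 (IH a)) ?orbT //; exists m.
Qed.

Lemma is_walk1 E p q j :
  is_walk E p q [:: j] <->
  (j < size E)%N /\ (((nth (edge0 R) E j).1.1 = p /\ (nth (edge0 R) E j).1.2 = q) \/
                     ((nth (edge0 R) E j).1.2 = p /\ (nth (edge0 R) E j).1.1 = q)).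
Proof.
rewrite /=; case: (nth (edge0 R) E j) => [[a b] l] /=.
split.
  case/andP=> -> /orP [/andP[/eqP -> /eqP ->]|/andP[/eqP -> /eqP ->]].
    by split=> //; left.
  by split=> //; right.
by case=> -> [[-> ->]|[-> ->]]; rewrite !eqxx ?orbT.
Qed.

Lemma walk_idx E p q s : is_walk E p q s -> all (fun i => i < size E)%N s.
Proof.
elim: s p => [|j s IH] p //=.
case: (nth (edge0 R) E j) => [[a b] l] /=.
by case/andP=> -> /orP [/andP [_ /IH]|/andP [_ /IH]].
Qed.

Lemma walk_edges_sub E p q s : is_walk E p q s ->
  {subset [seq nth (edge0 R) E i | i <- s] <= E}.
Proof.
move=> w z /mapP [i iS ->]; apply: mem_nth.
by have /allP := walk_idx w; apply.
Qed.

Lemma walk_conn E p q s :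
  is_walk E p q s -> conn [seq nth (edge0 R) E i | i <- s] p q.
Proof.
elim: s p => [|j s IH] p /=; first by move/eqP ->; exact: conn0.
case: (nth (edge0 R) E j) => [[a b] l] /=.
set L := [seq nth (edge0 R) E i | i <- s].
have sub : {subset L <= (a, b, l) :: L} by move=> z zs; rewrite inE zs orbT.
case/andP=> _ /orP [/andP [/eqP <- /IH h]|/andP [/eqP <- /IH h]];
  apply: connS (conn_sub sub h); exists (a, b, l); rewrite ?mem_head //=;
  by [left|right].
Qed.

Lemma conn_walk E p q : conn E p q -> exists s, is_walk E p q s.
Proof.
elim=> [x|x y z [e eE h] _ [s hs]]; first by exists [::] => /=.
exists (index e E :: s) => /=; rewrite nth_index // index_mem eE /=.
by case: e {eE} h => [[a b] l] /= [[-> ->]|[-> ->]]; rewrite hs !eqxx ?orbT.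
Qed.

End Connectivity.

Section Renaming.
Variable R : realType.
Local Notation edge := (nat * nat * R)%type.
Implicit Types (L : seq edge) (e : edge).

Definition ren (a b x : nat) := if x == b then a else x.
Definition renE (a b : nat) e : edge := (ren a b e.1.1, ren a b e.1.2, e.2).

Variables (a b : nat) (l : R).

Lemma ren_id x : x != b -> ren a b x = x.
Proof. by rewrite /ren => /negbTE ->. Qed.

Lemma conn_ren_eq L x y : ren a b x = ren a b y -> conn ((a, b, l) :: L) x y.
Proof.
have ab : adj ((a, b, l) :: L) a b by exists (a, b, l); [exact: mem_head | left].
rewrite /ren; case: eqP => [->|xb]; case: eqP => [->|yb] //.
- by move=> _; exact: conn0.
- by move=> <-; apply: conn1; exact: adj_sym.
- by move=> ->; apply: conn1.
- by move=> ->; exact: conn0.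
Qed.

Lemma conn_ren L x y : conn ((a, b, l) :: L) x y ->
  conn [seq renE a b e | e <- L] (ren a b x) (ren a b y).
Proof.
elim=> [z|x1 y1 z1 [e]]; first exact: conn0.
rewrite inE => /orP [/eqP ->|eL] h _ IH.
  apply: conn_trans IH; suff -> : ren a b x1 = ren a b y1 by exact: conn0.
  by case: h => /= [[<- <-]|[<- <-]]; rewrite /ren eqxx; case: eqP.
apply: connS IH; exists (renE a b e); first exact: map_f.
by case: h => [[<- <-]|[<- <-]]; [left|right].
Qed.

Lemma ren_conn L u w : conn [seq renE a b e | e <- L] u w ->
  forall x y, ren a b x = u -> ren a b y = w -> conn ((a, b, l) :: L) x y.
Proof.
elim=> [z|u1 v1 w1 [e' /mapP [e eL ->] h] _ IH] x y.
  by move=> <- /eqP; rewrite eq_sym => /eqP /conn_ren_eq.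
move=> xu yw.
have step : adj ((a, b, l) :: L) e.1.1 e.1.2.
  by exists e; [rewrite inE eL orbT | left].
case: h => /= [[h1 h2]|[h1 h2]].
- apply: conn_trans (conn_ren_eq _ _) _; first by rewrite xu -h1.
  by apply: connS step _; exact: IH.
- apply: conn_trans (conn_ren_eq _ _) _; first by rewrite xu -h1.
  by apply: connS (adj_sym step) _; exact: IH.
Qed.

Variable V : seq nat.
Hypotheses (aV : a \in V) (bV : b \in V) (ab : a != b).

Lemma mem_undup_ren x :
  (x \in undup [seq ren a b y | y <- V]) = (x \in V) && (x != b).
Proof.
rewrite mem_undup; apply/mapP/andP.
  by case=> y yV ->; rewrite /ren; case: eqP => [_|/eqP yb].
by case=> xV xb; exists x; rewrite ?ren_id.
Qed.

Lemma perm_undup_ren : uniq V -> perm_eq (undup [seq ren a b y | y <- V]) (rem b V).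
Proof.
move=> uV; apply: uniq_perm; rewrite ?undup_uniq ?rem_uniq //.
by move=> x; rewrite mem_undup_ren mem_rem_uniq // inE andbC.
Qed.

Lemma size_undup_ren : uniq V -> size (undup [seq ren a b y | y <- V]) = (size V).-1.
Proof. by move=> uV; rewrite (perm_size (perm_undup_ren uV)) size_rem. Qed.

End Renaming.

Lemma connected_size (R : realType) (V : seq nat) (E : seq (nat * nat * R)) :
  uniq V -> (forall e, e \in E -> (e.1.1 \in V) && (e.1.2 \in V)) ->
  connected_on E V -> (size V <= (size E).+1)%N.
Proof.
move sV: (size V) => n; elim: n V E sV => [//|n IH] V E sV uV EV cV.
case: n IH sV => [//|n] IH sV.
have p0V : nth 0%N V 0 \in V by rewrite mem_nth // sV.
have p1V : nth 0%N V 1 \in V by rewrite mem_nth // sV.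
have p01 : nth 0%N V 0 != nth 0%N V 1 by rewrite nth_uniq // sV.
case: (conn_edge p01 (cV _ _ p0V p1V)) => -[[a b] l] eE /= ab.
move: (EV _ eE) => /andP [/= aV bV].
have sE : (0 < size E)%N by case: (E) eE.
rewrite -(prednK sE) ltnS -(size_rem eE).
have := IH (undup [seq ren a b y | y <- V]) [seq renE a b e | e <- rem (a, b, l) E].
rewrite size_map size_undup_ren // sV; apply=> //.
- exact: undup_uniq.
- move=> e /mapP [e' /mem_rem e'E ->] /=.
  by have /andP[h1 h2] := EV _ e'E; rewrite !mem_undup !map_f.
- move=> p' q'; rewrite !mem_undup => /mapP [p pV ->] /mapP [q qV ->].
  apply: conn_ren; apply: eq_conn (cV _ _ pV qV).
  by move=> z; rewrite (perm_mem (perm_to_rem eE)).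
Qed.

Section Tree.
Variable R : realType.
Local Notation edge := (nat * nat * R)%type.
Implicit Types (L : seq edge) (e : edge).

Definition remove_edge L e := [seq x <- L | x != e].

Variables (V : seq nat) (E : seq edge).
Hypothesis tree : is_metrized_tree (MGraph V E).

Lemma tree_uniq_verts : uniq V. Proof. by case: tree. Qed.

Lemma tree_size_edges : size E = (size V).-1. Proof. by case: tree. Qed.

Lemma tree_edge e : e \in E ->
  [&& e.1.1 \in V, e.1.2 \in V, e.1.1 != e.1.2 & 0 < e.2].
Proof. by case: tree => _ /allP h _ _ /h. Qed.

Lemma tree_edge_verts e : e \in E -> (e.1.1 \in V) && (e.1.2 \in V).
Proof. by case/tree_edge/and4P=> -> ->. Qed.

Lemma tree_connected : connected_on E V.
Proof.
case: tree => _ _ h _ p q pV qV; case: (h p q pV qV) => s w.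
exact: conn_sub (walk_edges_sub w) (walk_conn w).
Qed.

Lemma tree_sub_disconnected L : {subset L <= E} -> (size L < size E)%N ->
  ~ connected_on L V.
Proof.
move=> sLE sL cL.
have := connected_size tree_uniq_verts (fun e eL => tree_edge_verts (sLE e eL)) cL.
by move: sL; rewrite tree_size_edges; case: (size V) => //= n; rewrite ltnNge => /negP.
Qed.

Lemma tree_uniq_edges : uniq E.
Proof.
apply/negPn/negP; rewrite -ltn_size_undup => lt.
apply: (tree_sub_disconnected (L := undup E)) lt _ => [z|p q pV qV].
  by rewrite mem_undup.
by apply: eq_conn (tree_connected pV qV) => z; rewrite mem_undup.
Qed.

Lemma tree_bridge e : e \in E -> ~ conn (remove_edge E e) e.1.1 e.1.2.
Proof.
move=> eE c; apply: (tree_sub_disconnected (L := remove_edge E e)).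
- by move=> z; rewrite mem_filter => /andP [].
- rewrite size_filter -[X in (_ < X)%N](count_predC (pred1 e)) addnC -addn1.
  by rewrite leq_add // -has_count; apply/hasP; exists e => /=.
move=> p q pV qV; apply: conn_by_adj (tree_connected pV qV) => x y [e' e'E h].
case: (eqVneq e' e) => [ee|ne]; last first.
  by apply: conn1; exists e' => //; rewrite mem_filter ne.
by subst e'; case: h => [[<- <-] //|[<- <-]]; exact: conn_sym.
Qed.

Lemma tree_side_split e p : e \in E -> p \in V ->
  conn (remove_edge E e) e.1.1 p \/ conn (remove_edge E e) e.1.2 p.
Proof.
move=> eE pV; have /andP [aV _] := tree_edge_verts eE.
suff gen : forall u w, conn E u w ->
    conn (remove_edge E e) e.1.1 u \/ conn (remove_edge E e) e.1.2 u ->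
    conn (remove_edge E e) e.1.1 w \/ conn (remove_edge E e) e.1.2 w.
  by apply: gen (tree_connected aV pV) _; left; exact: conn0.
move=> u w; elim=> // x y z [e' e'E h] _ IH hx; apply: IH.
case: (eqVneq e' e) => [ee|ne].
  by subst e'; case: h => [[_ <-]|[_ <-]]; [right|left]; exact: conn0.
have hxy : conn (remove_edge E e) x y.
  by apply: conn1; exists e' => //; rewrite mem_filter ne.
by case: hx => hx; [left|right]; apply: conn_trans hxy.
Qed.

Definition side e x := `[< conn (remove_edge E e) e.1.1 x >].

Lemma conn_side e p q : e \in E -> p \in V -> q \in V ->
  conn (remove_edge E e) p q <-> side e p = side e q.
Proof.
move=> eE pV qV; rewrite /side; split.
  move=> c; apply/idP/idP => /asboolP h; apply/asboolP.
    exact: conn_trans h c.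
  exact: conn_trans h (conn_sym c).
have nb := tree_bridge eE.
case: (tree_side_split eE pV) => hp; case: (tree_side_split eE qV) => hq.
- by move=> _; apply: conn_trans (conn_sym hp) hq.
- move/asboolP: (hp) => -> /esym /asboolP h.
  by case: nb; apply: conn_trans h (conn_sym hq).
- move/asboolP: (hq) => -> /asboolP h.
  by case: nb; apply: conn_trans h (conn_sym hp).
- by move=> _; apply: conn_trans (conn_sym hp) hq.
Qed.

Lemma side_card_gt0 e : e \in E ->
  (0 < count (side e) V)%N /\ (0 < count (predC (side e)) V)%N.
Proof.
move=> eE; have /andP [aV bV] := tree_edge_verts eE.
split; rewrite -has_count; apply/hasP.
  by exists e.1.1 => //; apply/asboolP; exact: conn0.
by exists e.1.2 => //=; apply/negP => /asboolP; apply: tree_bridge.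
Qed.

End Tree.

Lemma ler_sum_uniq_sub (R : numDomainType) (T : eqType) (s1 s2 : seq T) (F : T -> R) :
  uniq s1 -> {subset s1 <= s2} -> {in s2, forall x, 0 <= F x} ->
  \sum_(x <- s1) F x <= \sum_(x <- s2) F x.
Proof.
elim: s1 s2 => [|x s1 IH] s2 /=.
  by move=> _ _ F0; rewrite big_nil big_seq sumr_ge0.
case/andP=> xs1 u sub F0.
have xs2 : x \in s2 by apply: sub; rewrite mem_head.
rewrite big_cons (perm_big _ (perm_to_rem xs2)) big_cons lerD2l.
apply: IH => // [y ys1|y /mem_rem]; last exact: F0.
apply: rem_mem; first by apply: contraNneq xs1 => <-.
by apply: sub; rewrite inE ys1 orbT.
Qed.

Lemma not_uniq_cat (T : eqType) (s : seq T) : ~~ uniq s ->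
  exists s1 x s2 s3, s = s1 ++ x :: s2 ++ x :: s3.
Proof.
elim: s => [//|x s IH] /=; rewrite negb_and negbK => /orP [xs|/IH [s1 [y [s2 [s3 ->]]]]].
  by case/splitPr: xs => s2 s3; exists [::], x, s2, s3.
by exists (x :: s1), y, s2, s3.
Qed.

Section Distance.
Variable R : realType.
Local Notation edge := (nat * nat * R)%type.
Local Notation nthE E := (nth (edge0 R) E).
Variables (V : seq nat) (E : seq edge).
Hypothesis tree : is_metrized_tree (MGraph V E).

Definition cut_length p q :=
  \sum_(e <- E | ~~ `[< conn (remove_edge E e) p q >]) e.2.

Lemma walk_lenE s : walk_len E s = \sum_(e <- [seq nthE E i | i <- s]) e.2.
Proof. by rewrite /walk_len big_map. Qed.

Lemma tree_len_ge0 e : e \in E -> 0 <= e.2.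
Proof. by move/(tree_edge tree)/and4P => [_ _ _ /ltW]. Qed.

Lemma walk_avoid_conn p q s e : is_walk E p q s ->
  e \notin [seq nthE E i | i <- s] -> conn (remove_edge E e) p q.
Proof.
move=> w es; apply: conn_sub (walk_conn w) => z zs.
rewrite mem_filter (walk_edges_sub w zs) andbT.
by apply: contraNneq es => <-.
Qed.

Lemma walk_avoid_idx_conn p q s j : is_walk E p q s -> (j < size E)%N ->
  j \notin s -> conn (remove_edge E (nthE E j)) p q.
Proof.
move=> w jE js; have /allP iE := walk_idx w.
apply: walk_avoid_conn w _; apply/mapP => -[i iS /eqP].
by rewrite nth_uniq ?(tree_uniq_edges tree) ?jE ?iE // => /eqP ij; rewrite ij iS in js.
Qed.

Lemma cut_length_le_walk p q s : is_walk E p q s -> cut_length p q <= walk_len E s.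
Proof.
move=> w; rewrite /cut_length -big_filter walk_lenE.
apply: ler_sum_uniq_sub => [|e|x /(walk_edges_sub w)]; last exact: tree_len_ge0.
  exact/filter_uniq/(tree_uniq_edges tree).
rewrite mem_filter => /andP [/asboolPn nc eE]; apply/negPn/negP => ne.
exact/nc/(walk_avoid_conn w).
Qed.

(* Cutting the edge j splits a simple walk into two walks avoiding it, which
   join the two endpoints of j unless j separates p from q. *)
Lemma uniq_walk_edge_cut p q s j : is_walk E p q s -> uniq s -> j \in s ->
  ~ conn (remove_edge E (nthE E j)) p q.
Proof.
move=> w us jS c; have jE : (j < size E)%N by have /allP := walk_idx w; apply.
move: w us; case/splitPr: jS => s1 s2.
case/is_walk_cat => [m [w1 /(@is_walk_cat R E m q [:: j] s2) [m' [wj w2]]]].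
rewrite cat_uniq /= => /and4P [_ /norP [j1 _] j2 _].
have c1 := walk_avoid_idx_conn w1 jE j1.
have c2 := walk_avoid_idx_conn w2 jE j2.
have cm : conn (remove_edge E (nthE E j)) m m'.
  exact: conn_trans (conn_sym c1) (conn_trans c (conn_sym c2)).
apply: (tree_bridge tree (mem_nth (edge0 R) jE)).
by case/is_walk1: wj => _ [[-> ->]|[-> ->]] //; exact: conn_sym.
Qed.

Lemma uniq_walk_len p q s : is_walk E p q s -> uniq s -> walk_len E s = cut_length p q.
Proof.
move=> w us; apply/eqP; rewrite eq_le cut_length_le_walk // andbT.
rewrite /cut_length -big_filter walk_lenE.
apply: ler_sum_uniq_sub => [|e|x]; last by rewrite mem_filter => /andP [_]; exact: tree_len_ge0.
  rewrite map_inj_in_uniq // => i k iS kS /eqP.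
  have /allP iE := walk_idx w.
  by rewrite nth_uniq ?(tree_uniq_edges tree) ?iE // => /eqP.
case/mapP=> j jS ->; rewrite mem_filter (walk_edges_sub w (map_f _ jS)) andbT.
exact/asboolPn/(uniq_walk_edge_cut w).
Qed.

Lemma walk_shorten p q s : is_walk E p q s -> exists s', is_walk E p q s' /\ uniq s'.
Proof.
move sn: (size s) => n; elim/ltn_ind: n s p q sn => n IH s p q sn w.
case: (boolP (uniq s)) => [us|/not_uniq_cat [s1 [j [s2 [s3 e]]]]]; first by exists s.
subst s; move: w => /is_walk_cat [m1 [w1]].
move=> /(@is_walk_cat R E m1 q [:: j] (s2 ++ j :: s3)) [m2 [wj]].
move=> /is_walk_cat [m3 [w2]].
move=> /(@is_walk_cat R E m3 q [:: j] s3) [m4 [wj' w3]].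
have /is_walk1 [_ H1] := wj; have /is_walk1 [_ H2] := wj'.
move: sn; rewrite !size_cat /= size_cat /= => sn.
case: (eqVneq m2 m3) => [e23|/eqP n23].
  have e14 : m1 = m4 by case: H1 H2 => [[? ?]|[? ?]] [[? ?]|[? ?]]; congruence.
  subst m4; apply: (IH _ _ (s1 ++ s3) _ _ (erefl _)); first by rewrite size_cat; lia.
  by apply/is_walk_cat; exists m1.
have [e13 e24] : m3 = m1 /\ m4 = m2.
  by case: H1 H2 => [[? ?]|[? ?]] [[? ?]|[? ?]]; split; congruence.
subst m3 m4; apply: (IH _ _ (s1 ++ j :: s3) _ _ (erefl _)).
  by rewrite size_cat /=; lia.
apply/is_walk_cat; exists m1; split => //.
by apply/(@is_walk_cat R E m1 q [:: j] s3); exists m2.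
Qed.

Lemma dist_cut_length p q : p \in V -> q \in V -> dist (MGraph V E) p q = cut_length p q.
Proof.
move=> pV qV; have [s0 w0] := conn_walk (tree_connected tree pV qV).
have [s [w us]] := walk_shorten w0.
rewrite /dist /=; set X := (X in inf X).
have Xcut : X (cut_length p q) by exists s; rewrite (uniq_walk_len w us).
have lb : lbound X (cut_length p q) by move=> x [t [wt ->]]; exact: cut_length_le_walk wt.
apply/eqP; rewrite eq_le; apply/andP; split.
  by apply: ge_inf Xcut; exists (cut_length p q).
by apply: lb_le_inf lb; exists (cut_length p q).
Qed.

Lemma dist_tree p q : p \in V -> q \in V ->
  dist (MGraph V E) p q = \sum_(e <- E) e.2 * (side E e p != side E e q)%:R.
Proof.
move=> pV qV; rewrite dist_cut_length // /cut_length big_mkcond big_seq [RHS]big_seq.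
apply: eq_bigr => e eE; have cs := conn_side tree eE pV qV.
case: (eqVneq (side E e p) (side E e q)) => h.
  have -> : `[< conn (remove_edge E e) p q >] = true by apply/asboolP/cs.
  by rewrite mulr0.
have -> : `[< conn (remove_edge E e) p q >] = false.
  by apply/asboolP => /cs /eqP; rewrite (negbTE h).
by rewrite mulr1.
Qed.

End Distance.

Section Counting.
Variable R : comRingType.

Lemma sum_if (T : Type) (s : seq T) (Q : pred T) (c1 c0 : R) :
  \sum_(x <- s) (if Q x then c1 else c0) =
  (count Q s)%:R * c1 + (count (predC Q) s)%:R * c0.
Proof.
elim: s => [|x s IH]; first by rewrite big_nil !mul0r addr0.
by rewrite big_cons IH /=; case: (Q x) => /=; rewrite !natrD; ring.
Qed.

Lemma sum_if_if (T : Type) (s : seq T) (P Q : pred T) (c1 c0 : R) :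
  \sum_(x <- s) (if P x then (if Q x then c1 else c0) else 0) =
  (count [pred x | P x && Q x] s)%:R * c1 + (count [pred x | P x && ~~ Q x] s)%:R * c0.
Proof.
elim: s => [|x s IH]; first by rewrite big_nil !mul0r addr0.
by rewrite big_cons IH /=; case: (P x); case: (Q x) => /=; rewrite ?natrD ?add0r; ring.
Qed.

Lemma sum_pairs_sep (T : Type) (s : seq T) (P : pred T) :
  \sum_(p <- s) \sum_(q <- s) (P p != P q)%:R =
  2 * (count P s)%:R * ((size s)%:R - (count P s)%:R) :> R.
Proof.
have inner b : \sum_(q <- s) (b != P q)%:R =
    (if b then (count (predC P) s)%:R else (count P s)%:R) :> R.
  elim: s => [|x s IH]; first by rewrite big_nil; case: b.
  by rewrite big_cons IH /= {IH}; case: b; case: (P x); rewrite /= ?natrD ?add0r //; ring.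
rewrite (eq_bigr _ (fun p _ => inner (P p))) sum_if -(count_predC P s) natrD.
ring.
Qed.

End Counting.

Section Wiener.
Variable R : realType.
Local Notation edge := (nat * nat * R)%type.
Variables (V : seq nat) (E : seq edge).
Hypothesis tree : is_metrized_tree (MGraph V E).

Lemma wiener_tree : wiener (MGraph V E) =
  \sum_(e <- E) e.2 * ((count (side E e) V)%:R * ((size V)%:R - (count (side E e) V)%:R)).
Proof.
rewrite /wiener /=.
under eq_big_seq => p pV do under eq_big_seq => q qV do
  rewrite (dist_tree tree pV qV).
rewrite exchange_big /=; under eq_bigr do rewrite exchange_big /=.
rewrite exchange_big big_distrr /=; apply: eq_bigr => e _.
under eq_bigr do rewrite -big_distrr /=.
by rewrite -big_distrr /= exchange_big sum_pairs_sep; field.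
Qed.

End Wiener.

Lemma conn_filter (R : realType) (L : seq (nat * nat * R)) (Q : pred nat) p q :
  (forall x y, adj L x y -> Q x = Q y) -> conn L p q -> Q p ->
  conn [seq y <- L | Q y.1.2] p q.
Proof.
move=> cl; elim=> [x|x y z hxy _ IH] Qx; first exact: conn0.
have Qy : Q y by rewrite -(cl _ _ hxy).
apply: connS (IH Qy); case: hxy => e eL h; exists e => //.
by rewrite mem_filter eL andbT; case: h => [[_ ->]|[-> _]].
Qed.

Section SideEdges.
Variable R : realType.
Local Notation edge := (nat * nat * R)%type.
Variables (V : seq nat) (E : seq edge).
Hypothesis tree : is_metrized_tree (MGraph V E).

Lemma side_adj e x y : adj (remove_edge E e) x y -> side E e x = side E e y.
Proof.
move=> h; apply/idP/idP => /asboolP c; apply/asboolP.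
  exact: conn_trans c (conn1 h).
exact: conn_trans c (conn1 (adj_sym h)).
Qed.

Lemma count_class_le e (Q : pred nat) :
  (forall x y, adj (remove_edge E e) x y -> Q x = Q y) ->
  {in V &, forall p q, Q p -> Q q -> conn (remove_edge E e) p q} ->
  (count Q V <= (count [pred y | (y != e) && Q y.1.2] E).+1)%N.
Proof.
move=> cl cQ.
have -> : count [pred y | (y != e) && Q y.1.2] E =
          size [seq y <- remove_edge E e | Q y.1.2].
  by rewrite size_filter count_filter; apply: eq_count => y /=; rewrite andbC.
rewrite -size_filter; apply: connected_size.
- exact/filter_uniq/(tree_uniq_verts tree).
- move=> y; rewrite mem_filter => /andP [Qy]; rewrite mem_filter => /andP [ye yE].
  have /andP [y1 y2] := tree_edge_verts tree yE.
  rewrite !mem_filter y1 y2 Qy !andbT (cl y.1.1 y.1.2) //.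
  by exists y; [rewrite mem_filter ye yE | left].
- move=> p q; rewrite !mem_filter => /andP [Qp pV] /andP [Qq qV].
  exact: conn_filter cl (cQ _ _ pV qV Qp Qq) Qp.
Qed.

(* Removing e leaves two subtrees, one on each side; each has one edge fewer
   than vertices, as both inequalities of [count_class_le] must be tight. *)
Lemma side_edge_count e : e \in E ->
  count [pred y | (y != e) && side E e y.1.2] E = (count (side E e) V).-1 /\
  count [pred y | (y != e) && ~~ side E e y.1.2] E = (count (predC (side E e)) V).-1.
Proof.
move=> eE.
have leA : (count (side E e) V <=
            (count [pred y | (y != e) && side E e y.1.2] E).+1)%N.
  apply: count_class_le => [x y /side_adj //|p q pV qV Pp Pq].
  by apply/(conn_side tree eE pV qV); rewrite Pp Pq.
have leB : (count (predC (side E e)) V <=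
            (count [pred y | (y != e) && ~~ side E e y.1.2] E).+1)%N.
  apply: count_class_le => [x y /side_adj /= -> //|p q pV qV /negbTE Pp /negbTE Pq].
  by apply/(conn_side tree eE pV qV); rewrite Pp Pq.
have [nA nB] := side_card_gt0 tree eE.
have splitE : (count [pred y | (y != e) && side E e y.1.2] E +
    count [pred y | (y != e) && ~~ side E e y.1.2] E = (size E).-1)%N.
  have -> : count [pred y | (y != e) && side E e y.1.2] E =
            count (fun y => side E e y.1.2) (remove_edge E e).
    by rewrite count_filter; apply: eq_count => y /=; rewrite andbC.
  have -> : count [pred y | (y != e) && ~~ side E e y.1.2] E =
            count (predC (fun y => side E e y.1.2)) (remove_edge E e).
    by rewrite count_filter; apply: eq_count => y /=; rewrite andbC.
  rewrite count_predC size_filter.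
  have := count_predC (pred1 e) E.
  by rewrite count_uniq_mem ?(tree_uniq_edges tree) // eE add1n => <-.
have := count_predC (side E e) V; have := tree_size_edges tree.
move: leA leB splitE nA nB; lia.
Qed.

End SideEdges.

Lemma uniq_map_inj_in (T1 T2 : eqType) (f : T1 -> T2) (s : seq T1) :
  uniq (map f s) -> {in s &, injective f}.
Proof.
elim: s => [//|x s IH] /= /andP [fx u] y z.
rewrite !inE => /orP [/eqP ->|ys] /orP [/eqP ->|zs] // h.
- by move: fx; rewrite h map_f.
- by move: fx; rewrite -h map_f.
- exact: IH.
Qed.

Section Contraction.
Variable R : realType.
Local Notation edge := (nat * nat * R)%type.
Variables (V : seq nat) (E : seq edge).
Hypothesis tree : is_metrized_tree (MGraph V E).
Variables (j a b : nat) (l : R).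
Hypothesis jE : (j < size E)%N.
Hypothesis ej : nth (edge0 R) E j = (a, b, l).

Let L := take j E ++ drop j.+1 E.
Let V' := undup [seq ren a b x | x <- V].
Let E' := [seq renE a b e | e <- L].

Lemma contract_eq : contract (MGraph V E) j = MGraph V' E'.
Proof. by rewrite /contract /edge_at /= ej. Qed.

Lemma perm_contract_edges : perm_eq E ((a, b, l) :: L).
Proof.
rewrite -{1}(cat_take_drop j E) (drop_nth (edge0 R) jE) ej /L.
by rewrite -cat1s perm_catCA.
Qed.

Lemma mem_contract_edges x : (x \in E) = (x \in (a, b, l) :: L).
Proof. by rewrite (perm_mem perm_contract_edges). Qed.

Lemma contracted_edge_in : (a, b, l) \in E.
Proof. by rewrite mem_contract_edges mem_head. Qed.

Lemma contracted_edge_verts : [/\ a \in V, b \in V & a != b].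
Proof. by case/and4P: (tree_edge tree contracted_edge_in) => /= -> -> ->. Qed.

Lemma uniq_contract_edges : uniq ((a, b, l) :: L).
Proof. by rewrite -(perm_uniq perm_contract_edges) (tree_uniq_edges tree). Qed.

Lemma remaining_edge_neq e : e \in L -> e != (a, b, l).
Proof. by move=> eL; apply: contraTneq uniq_contract_edges => <-; rewrite /= eL. Qed.

Lemma mem_contract_verts x : (x \in V') = (x \in V) && (x != b).
Proof. by case: contracted_edge_verts => aV bV ab; rewrite mem_undup_ren. Qed.

Lemma size_contract_verts : size V' = (size V).-1.
Proof.
by case: contracted_edge_verts => aV bV ab; rewrite size_undup_ren // (tree_uniq_verts tree).
Qed.

(* The renaming cannot turn another edge into a loop: both its endpoints
   would then be joined to a and b without using the bridge (a, b). *)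
Lemma ren_edge_neq e : e \in L -> ren a b e.1.1 != ren a b e.1.2.
Proof.
move=> eL; have eE : e \in E by rewrite mem_contract_edges inE eL orbT.
have /and4P [_ _ e12 _] := tree_edge tree eE.
apply/negP => /eqP h; apply: (tree_bridge tree contracted_edge_in) => /=.
have ad : adj (remove_edge E (a, b, l)) e.1.1 e.1.2.
  by exists e; [rewrite mem_filter remaining_edge_neq | left].
move: h e12; rewrite /ren.
case: eqP => [e1b|_]; case: eqP => [e2b|_].
- by rewrite e1b e2b eqxx.
- by move=> ea _; rewrite e1b -ea in ad; exact: conn_sym (conn1 ad).
- by move=> ae _; rewrite e2b ae in ad; exact: conn1 ad.
- by move=> ->; rewrite eqxx.
Qed.

Lemma contract_tree : is_metrized_tree (MGraph V' E').
Proof.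
case: contracted_edge_verts => aV bV ab.
have renV x : x \in V -> ren a b x \in V'.
  by move=> xV; rewrite mem_undup map_f.
split => /=.
- exact: undup_uniq.
- apply/allP => e' /mapP [e eL ->] /=.
  have eE : e \in E by rewrite mem_contract_edges inE eL orbT.
  case/and4P: (tree_edge tree eE) => e1 e2 _ ->.
  by rewrite !renV // ren_edge_neq.
- move=> p' q'; rewrite !mem_undup => /mapP [p pV ->] /mapP [q qV ->].
  apply: conn_walk; apply: conn_ren.
  by apply: eq_conn (tree_connected tree pV qV) => z; rewrite mem_contract_edges.
- rewrite size_map size_contract_verts -(tree_size_edges tree).
  by rewrite (perm_size perm_contract_edges).
Qed.

Lemma side_contract e p : e \in L -> p \in V' -> side E' (renE a b e) p = side E e p.
Proof.
move=> eL pV'.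
have inj := uniq_map_inj_in (tree_uniq_edges contract_tree).
have ne := remaining_edge_neq eL.
have pb : p != b by move: pV'; rewrite mem_contract_verts => /andP [].
set L' := [seq y <- L | y != e].
have memE' : remove_edge E' (renE a b e) =i [seq renE a b y | y <- L'].
  move=> x; rewrite mem_filter; apply/andP/mapP.
    case=> xne /mapP [y yL xy]; exists y => //; rewrite mem_filter yL andbT.
    by apply: contraNneq xne => ye; rewrite xy ye.
  case=> y; rewrite mem_filter => /andP [ye yL] ->; split; last exact: map_f.
  by apply/negP => /eqP /(inj _ _ yL eL) ye2; rewrite ye2 eqxx in ye.
have memE : (a, b, l) :: L' =i remove_edge E e.
  move=> x; rewrite mem_filter mem_contract_edges !inE mem_filter.
  by case: (eqVneq x (a, b, l)) => [->|] //=; rewrite eq_sym ne.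
rewrite /side; apply/idP/idP => /asboolP h; apply/asboolP.
  apply: eq_conn memE _; apply: (ren_conn l (eq_conn memE' h)) => //.
  exact: ren_id.
apply: eq_conn (fun x => esym (memE' x)) _.
by have := conn_ren (eq_conn (fun x => esym (memE x)) h); rewrite (ren_id a pb).
Qed.

Lemma wiener_contract : wiener (MGraph V' E') = \sum_(e <- L) e.2 *
  ((count (side E e) (rem b V))%:R * ((size V)%:R - 1 - (count (side E e) (rem b V))%:R)).
Proof.
case: contracted_edge_verts => aV bV ab.
rewrite (wiener_tree contract_tree) /= big_map; apply: eq_big_seq => e eL /=.
have perm := perm_undup_ren aV ab (tree_uniq_verts tree).
rewrite -(eq_in_count (a1 := side E e)) => [|p pV']; last by rewrite side_contract.
rewrite (permP perm) size_contract_verts.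
have : (0 < size V)%N by case: (V) bV.
by case: (size V) => [//|n] _; rewrite succnK -natr1; ring.
Qed.

Lemma contracted_total_length :
  total_length (MGraph V' E') = total_length (MGraph V E) - l.
Proof.
rewrite /total_length /= big_map (perm_big _ perm_contract_edges) big_cons /=.
by rewrite addrC addrK.
Qed.

End Contraction.

Section ContractionSum.
Variable R : realType.
Local Notation edge := (nat * nat * R)%type.
Variables (V : seq nat) (E : seq edge).
Hypothesis tree : is_metrized_tree (MGraph V E).

(* The term of e in the Wiener index of the tree contracted along y, which
   merges y.1.2 into y.1.1: the side of e loses the vertex y.1.2 if it has it. *)
Definition contracted_term (e y : edge) : R :=
  let m := (count (side E e) V)%:R - (side E e y.1.2)%:R in
  e.2 * (m * ((size V)%:R - 1 - m)).

Lemma wiener_contract_terms (j : 'I_(size E)) :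
  wiener (contract (MGraph V E) j) =
  \sum_(e <- E) (if e != nth (edge0 R) E j then contracted_term e (nth (edge0 R) E j) else 0).
Proof.
case ej: (nth (edge0 R) E j) => [[a b] l].
have jE := ltn_ord j.
rewrite (contract_eq V ej) (wiener_contract tree jE ej).
have [aV bV ab] := contracted_edge_verts tree jE ej.
rewrite (perm_big _ (perm_contract_edges jE ej)) big_cons eqxx /= add0r.
apply: eq_big_seq => e eL; rewrite (remaining_edge_neq tree jE ej eL) /contracted_term /=.
rewrite count_rem bV /=; case: (boolP (side E e b)) => /= sb; rewrite ?subn0 ?subr0 //.
by rewrite natrB // -has_count; apply/hasP; exists b.
Qed.

Lemma sum_wiener_contract :
  \sum_(j < size E) wiener (contract (MGraph V E) j) =
  ((size V)%:R - 4) * wiener (MGraph V E) + (size V)%:R * total_length (MGraph V E).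
Proof.
under eq_bigr => j _ do rewrite wiener_contract_terms.
transitivity (\sum_(y <- E) \sum_(e <- E)
    (if e != y then contracted_term e y else 0)).
  by rewrite (big_nth (edge0 R)) big_mkord.
rewrite exchange_big /= (wiener_tree tree) /total_length /= !big_distrr -big_split /=.
apply: eq_big_seq => e eE.
set n := count (side E e) V.
rewrite (eq_bigr (fun y => if y != e then (if side E e y.1.2
    then e.2 * ((n%:R - 1) * ((size V)%:R - 1 - (n%:R - 1)))
    else e.2 * ((n%:R - 0) * ((size V)%:R - 1 - (n%:R - 0)))) else 0)); last first.
  by move=> y _; rewrite eq_sym /contracted_term; case: (side E e y.1.2).
rewrite sum_if_if; have [-> ->] := side_edge_count tree eE.
have [cA cB] := side_card_gt0 tree eE.
have sV := count_predC (side E e) V.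
rewrite -/n in cA sV *; clearbody n.
move: (count (predC _) V) cB sV => [//|m] _ <-.
case: n cA => [//|k] _ /=.
by rewrite -[k.+1]addn1 -[m.+1]addn1 !natrD; ring.
Qed.

End ContractionSum.

Section IteratedContraction.
Variable R : realType.

Definition contraction_coef (v k : nat) : R :=
  ((v%:R) ^+ 2 - (k + 2)%:R * v%:R + k%:R - 1) * k%:R
    / ((v%:R - k%:R - 2) * (v%:R - k%:R - 3)).

Lemma contraction_coefS v k : (k + 5 <= v)%N ->
  (v%:R - 4) * contraction_coef v k.+1 = v%:R + (v%:R - 2) * contraction_coef v.-1 k.
Proof.
move=> kv; have [t ->] : exists t, v = (t + k + 5)%N by exists (v - (k + 5))%N; lia.
have -> : (t + k + 5).-1 = (t + k + 4)%N by lia.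
rewrite /contraction_coef -addn1 !natrD.
have t0 := ler0n R t; have k0 := ler0n R k.
by field; rewrite !lt0r_neq0 //; lra.
Qed.

Lemma contract_is_tree (G : mgraph R) (j : 'I_(size (medges G))) :
  is_metrized_tree G -> is_metrized_tree (contract G j).
Proof.
case: G j => V E j tree /=; have jE : (j < size E)%N := ltn_ord j.
case ej: (nth (edge0 R) E j) => [[a b] l].
by rewrite (contract_eq V ej); exact (contract_tree tree jE ej).
Qed.

Lemma nverts_contract (G : mgraph R) (j : 'I_(size (medges G))) :
  is_metrized_tree G -> nverts (contract G j) = (nverts G).-1.
Proof.
case: G j => V E j tree /=; have jE : (j < size E)%N := ltn_ord j.
case ej: (nth (edge0 R) E j) => [[a b] l].
by rewrite (contract_eq V ej); exact (size_contract_verts tree jE ej).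
Qed.

Lemma total_length_contract (G : mgraph R) (j : 'I_(size (medges G))) :
  total_length (contract G j) = total_length G - (nth (edge0 R) (medges G) j).2.
Proof.
case: G j => V E j /=; have jE : (j < size E)%N := ltn_ord j.
case ej: (nth (edge0 R) E j) => [[a b] l].
by rewrite (contract_eq V ej); exact (contracted_total_length V jE ej).
Qed.

Lemma sum_total_length_contract (G : mgraph R) : is_metrized_tree G ->
  \sum_(j < size (medges G)) total_length (contract G j) =
  ((nverts G)%:R - 2) * total_length G.
Proof.
case: G => V E tree; under eq_bigr => j _ do rewrite total_length_contract.
rewrite sumrB sumr_const card_ord -(big_mkord xpredT (fun j => (nth (edge0 R) E j).2)).
rewrite -(big_nth (edge0 R) xpredT (fun e : nat * nat * R => e.2)) /=.
rewrite (tree_size_edges tree) /total_length /nverts /=.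
move: (tree_size_edges tree); case: (size V) => [|n] /= sE.
  by move/size0nil: sE => ->; rewrite big_nil mulr0 mul0rn subr0.
by rewrite -mulr_natr -natr1; ring.
Qed.

Lemma iter_contr_sumE k (G : mgraph R) : is_metrized_tree G -> (k + 4 <= nverts G)%N ->
  iter_contr_sum k G =
  ((nverts G - 4) ^_ k)%:R * (wiener G + contraction_coef (nverts G) k * total_length G).
Proof.
elim: k G => [|k IH] G tree kv.
  by rewrite /= ffactn0 /contraction_coef mulr0 !mul0r addr0 mul1r.
have kv' (j : 'I_(size (medges G))) : (k + 4 <= nverts (contract G j))%N.
  by rewrite nverts_contract //; lia.
rewrite /=; under eq_bigr => j _ do
  rewrite (IH _ (contract_is_tree j tree) (kv' j)) (nverts_contract j tree).
case: G tree kv {kv'} => V E tree; rewrite /nverts /= => kv.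
rewrite -big_distrr big_split sum_wiener_contract // -big_distrr.
rewrite (sum_total_length_contract tree) /nverts /=.
have coefS := @contraction_coefS (size V) k (ltac:(lia)).
rewrite ffactnS (_ : (size V - 4).-1 = (size V).-1 - 4)%N; last by lia.
rewrite natrM natrB; last by lia.
set F := ((size V).-1 - 4) ^_ k; set W := wiener _; set L := total_length _.
have -> : ((size V)%:R - 4%:R) * F%:R * (W + contraction_coef (size V) k.+1 * L) =
    F%:R * (((size V)%:R - 4) * W + ((size V)%:R - 4) * contraction_coef (size V) k.+1 * L).
  by ring.
by rewrite coefS; ring.
Qed.
End IteratedContraction.

Lemma contraction_coef_last (R : realType) v : (5 <= v)%N ->
  contraction_coef R v (v - 4) = (3 * v%:R - 5) * (v%:R - 4) / 2.
Proof.
move=> v5; have [t ->] : exists t, v = (t + 5)%N by exists (v - 5)%N; lia.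
rewrite /contraction_coef (_ : (t + 5 - 4 = t + 1)%N); last by lia.
have t0 := ler0n R t.
by rewrite !natrD; field; rewrite !lt0r_neq0 //; lra.
Qed.

Lemma wiener_iter_contr_sum (R : realType) (G : mgraph R) k :
  is_metrized_tree G -> (k + 4 <= nverts G)%N ->
  wiener G = ((nverts G - 4 - k)`!)%:R / ((nverts G - 4)`!)%:R * iter_contr_sum k G
             - contraction_coef R (nverts G) k * total_length G.
Proof.
move=> tree kv; rewrite (iter_contr_sumE tree kv) mulrA [X in X * _]mulrAC -natrM.
rewrite mulnC ffact_fact; last by lia.
rewrite mulfV ?mul1r ?addrK //.
by rewrite pnatr_eq0 -lt0n fact_gt0.
Qed.

Theorem theorem4p4 (R : realType) (G : mgraph R) :
  is_metrized_tree G -> (5 <= nverts G)%N ->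
  (forall k : nat, (1 <= k <= nverts G - 4)%N ->
     wiener G =
       ((nverts G - 4 - k)`!)%:R / ((nverts G - 4)`!)%:R * iter_contr_sum k G
       - ((nverts G)%:R ^+ 2 - (k + 2)%:R * (nverts G)%:R + k%:R - 1) * k%:R
         / (((nverts G)%:R - k%:R - 2) * ((nverts G)%:R - k%:R - 3))
         * total_length G)
  /\
  wiener G =
    ((nverts G - 4)`!)%:R^-1 * iter_contr_sum (nverts G - 4) G
    - (3 * (nverts G)%:R - 5) * ((nverts G)%:R - 4) / 2 * total_length G.
Proof.
move=> tree v5; split=> [k /andP [_ kv]|].
  by apply: wiener_iter_contr_sum tree _; lia.
rewrite (wiener_iter_contr_sum tree (_ : nverts G - 4 + 4 <= _)%N); last by lia.
rewrite subnn fact0 div1r.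
by rewrite contraction_coef_last.
Qed.
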